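(* Let $X=PS$ where $P,S\in\mathrm{Sym}(n)$ and $P$ is positive definite. Let $\lambda_{\min},\lambda_{\max}$ be the smallest and largest eigenvalues of $P$, $\varrho=\lambda_{\min}/\lambda_{\max}\in(0,1]$ and $c=\frac{(1-\varrho)^2}{1+\varrho^2}\in[0,1)$. Then $$\operatorname{tr}(X^2)-|X|^2\ge -c\,|\mathring X|^2,$$ where $\mathring X=X-\frac{\operatorname{tr}X}{n}\mathrm{Id}$.
   Context: $\mathrm{Sym}(n)$ denotes real symmetric $n\times n$ matrices; $|X|^2=\operatorname{tr}(XX^{\mathsf T})$ is the squared Frobenius norm. *)

From mathcomp Require Import all_boot all_order all_algebra.
Set Implicit Arguments. Unset Strict Implicit. Unset Printing Implicit Defensive.
Import Order.TTheory GRing.Theory Num.Theory.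
Local Open Scope ring_scope.

Definition symmx (R : ringType) (n : nat) (A : 'M[R]_n) : Prop := A^T = A.

Definition posdefmx (R : numDomainType) (n : nat) (A : 'M[R]_n) : Prop :=
  symmx A /\ forall v : 'cV[R]_n, v != 0 -> 0 < (v^T *m A *m v) 0 0.

Definition frob2 (R : ringType) (n : nat) (X : 'M[R]_n) : R := \tr (X *m X^T).

Definition tracefree (R : fieldType) (n : nat) (X : 'M[R]_n) : 'M[R]_n :=
  X - (\tr X / n%:R)%:M.

(** Unitarily diagonalize P over [R[i]]: in an eigenbasis with eigenvalues d_i
    the matrix X becomes Y = D T with T Hermitian, so
      tr(X^2) - |X|^2 = \sum_(i,j) (d_i d_j - d_i^2) |T_ij|^2,
    while |X - k Id|^2 >= \sum_(i <> j) d_i^2 |T_ij|^2 for every scalar k, since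
    the shift only touches the diagonal.  Pairing (i, j) with (j, i), the
    diagonal terms cancel and the claim reduces to
    (1 - c) (a^2 + b^2) <= 2 a b for eigenvalues a, b, which holds because
    2 a b - (1 - c) (a^2 + b^2) = 2 (a - rho b) (b - rho a) / (1 + rho^2). *)

From mathcomp Require Import all_boot all_order all_algebra.
From mathcomp Require Import sesquilinear spectral complex.
From mathcomp Require Import ring.
Import Order.TTheory GRing.Theory Num.Theory.
Local Open Scope ring_scope.
Local Open Scope sesquilinear_scope.
Set Implicit Arguments. Unset Strict Implicit. Unset Printing Implicit Defensive.

Definition pinch (F : fieldType) (rho : F) : F := (1 - rho) ^+ 2 / (1 + rho ^+ 2).

Lemma fmorph_pinch (F K : fieldType) (f : {rmorphism F -> K}) (rho : F) :
  f (pinch rho) = pinch (f rho).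
Proof. by rewrite /pinch fmorph_div rmorphXn rmorphB rmorphD rmorph1 rmorphXn. Qed.

Lemma pinch_ge0 (F : numFieldType) (rho : F) : 0 <= rho -> 0 <= pinch rho.
Proof.
move=> rho_ge0; have rho_real := ger0_real rho_ge0.
apply: divr_ge0; first by apply: real_exprn_even_ge0; rewrite ?realB.
by apply: addr_ge0; rewrite ?ler01 ?real_exprn_even_ge0.
Qed.

Lemma pinch_sqrD_le_mul2 (F : numFieldType) (l L a b : F) :
  0 < l -> l <= a <= L -> l <= b <= L ->
  (1 - pinch (l / L)) * (a ^+ 2 + b ^+ 2) <= 2 * a * b.
Proof.
move=> l_gt0 /andP[la aL] /andP[lb bL].
have L_gt0 : 0 < L by apply: lt_le_trans aL; apply: lt_le_trans la.
set rho := l / L; have rho_gt0 : 0 < rho by rewrite divr_gt0.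
have rhoL : rho * L = l by rewrite divfK ?gt_eqF.
have den_gt0 : 0 < 1 + rho ^+ 2 by rewrite ltr_wpDr ?ltr01 ?exprn_ge0 ?ltW.
rewrite -subr_ge0.
have -> : 2 * a * b - (1 - pinch rho) * (a ^+ 2 + b ^+ 2)
    = 2 * ((a - rho * b) * (b - rho * a)) / (1 + rho ^+ 2).
  by rewrite /pinch; field; rewrite gt_eqF.
have sub_rho_ge0 (x y : F) : l <= x -> y <= L -> 0 <= x - rho * y.
  by move=> lx yL; rewrite subr_ge0; apply: le_trans lx; rewrite -rhoL ler_wpM2l // ltW.
apply: divr_ge0; last exact: ltW.
by rewrite mulr_ge0 // mulr_ge0 // sub_rho_ge0.
Qed.

Lemma sumr_sym_ge0 (F : numDomainType) (I : finType) (g : I -> I -> F) :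
  (forall i j, 0 <= g i j + g j i) -> 0 <= \sum_i \sum_j g i j.
Proof.
move=> gsym_ge0; rewrite -(pmulrn_lge0 _ (isT : (0 < 2)%N)) mulr2n.
rewrite {2}exchange_big -big_split /=.
by apply: sumr_ge0 => i _; rewrite -big_split /=; apply: sumr_ge0.
Qed.

Lemma mxtrace_mulE (R : pzSemiRingType) n (M N : 'M[R]_n) :
  \tr (M *m N) = \sum_i \sum_j M i j * N j i.
Proof. by apply: eq_bigr => i _; rewrite mxE. Qed.

Lemma posdefmx_eigenvalue_gt0 (F : realFieldType) n (A : 'M[F]_n) a :
  posdefmx A -> eigenvalue A a -> 0 < a.
Proof.
move=> [_ A_pos] /eigenvalueP[v vA v_neq0].
have := A_pos v^T; rewrite trmx_eq0 trmxK vA -scalemxAl mxE => /(_ v_neq0).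
have : 0 <= (v *m v^T) 0 0.
  by rewrite mxE sumr_ge0 // => j _; rewrite mxE -expr2 sqr_ge0.
by rewrite le_eqVlt => /predU1P[<- | /pmulr_lgt0 ->]; rewrite ?mulr0 ?ltxx.
Qed.

Section HermitianFrobenius.
Variables (C : numClosedFieldType) (n : nat).
Implicit Types (M T : 'M[C]_n) (k : C).

Definition hfrob2 M : C := \tr (M *m M ^t*).

Lemma hfrob2E M : hfrob2 M = \sum_i \sum_j `|M i j| ^+ 2.
Proof.
rewrite /hfrob2 mxtrace_mulE; apply: eq_bigr => i _.
by apply: eq_bigr => j _; rewrite !mxE normCK.
Qed.

Lemma hfrob2_sub_scalar_ge M k :
  \sum_i \sum_j (if i == j then 0 else `|M i j| ^+ 2) <= hfrob2 (M - k%:M).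
Proof.
rewrite hfrob2E; apply: ler_sum => i _; apply: ler_sum => j _.
by rewrite !mxE; case: eqP => _; rewrite ?exprn_ge0 // mulr0n subr0.
Qed.

Lemma diag_herm_trace_gap_ge (l L k : C) (d : 'rV[C]_n) T :
  0 < l -> l <= L -> (forall i, l <= d 0 i <= L) -> T ^t* = T ->
  - pinch (l / L) * hfrob2 (diag_mx d *m T - k%:M)
    <= \tr ((diag_mx d *m T) *m (diag_mx d *m T)) - hfrob2 (diag_mx d *m T).
Proof.
move=> l_gt0 lL d_bound T_herm; set Y := diag_mx d *m T; set c := pinch (l / L).
have c_ge0 : 0 <= c by rewrite pinch_ge0 // divr_ge0 ?ltW ?(lt_le_trans l_gt0).
have d_real i : d 0 i \is Num.real.
  by case/andP: (d_bound i) => /(lt_le_trans l_gt0)/gtr0_real.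
have Y_ij i j : Y i j = d 0 i * T i j by rewrite /Y mul_diag_mx mxE.
have T_ji i j : T j i = (T i j)^* by rewrite -[in LHS]T_herm !mxE.
pose off i j := if i == j then 0 else `|Y i j| ^+ 2.
apply: le_trans (_ : - c * \sum_i \sum_j off i j <= _).
  by rewrite !mulNr lerN2 ler_wpM2l ?hfrob2_sub_scalar_ge.
rewrite -subr_ge0 mulNr opprK hfrob2E mxtrace_mulE mulr_sumr -sumrB -big_split /=.
under eq_bigr => i _ do rewrite mulr_sumr -sumrB -big_split /=.
apply: sumr_sym_ge0 => i j; rewrite /off !Y_ij !normrM !exprMn.
rewrite (real_normK (d_real i)) (real_normK (d_real j)) [T j i]T_ji norm_conjC normCK.
case: eqVneq => [-> | _] /=; first by rewrite [X in _ <= X](_ : _ = 0) //; ring.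
rewrite [X in 0 <= X](_ : _ = T i j * (T i j)^*
    * (2 * d 0 i * d 0 j - (1 - c) * (d 0 i ^+ 2 + d 0 j ^+ 2))); last by ring.
apply: mulr_ge0; first by rewrite -normCK exprn_ge0.
by rewrite subr_ge0; apply: pinch_sqrD_le_mul2.
Qed.

End HermitianFrobenius.

Lemma adjmx_conj (C : numClosedFieldType) m n (U : 'M[C]_(m, n)) (M : 'M[C]_n) :
  (U *m M *m U ^t*) ^t* = U *m M ^t* *m U ^t*.
Proof. by rewrite !trmx_mul !map_mxM trmxCK mulmxA. Qed.

Section UnitaryConjugation.
Variables (C : numClosedFieldType) (n : nat) (U : 'M[C]_n).
Hypothesis U_unitary : U \is unitarymx.
Implicit Types (M N : 'M[C]_n).

Lemma unitary_adjmxK : U ^t* *m U = 1%:M.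
Proof. by move: U_unitary; rewrite -trmxC_unitary => /unitarymxP; rewrite trmxCK. Qed.

Lemma mulmx_unitary_conj M N :
  (U *m M *m U ^t*) *m (U *m N *m U ^t*) = U *m (M *m N) *m U ^t*.
Proof. by rewrite !mulmxA mulmxKtV. Qed.

Lemma mxtrace_unitary_conj M : \tr (U *m M *m U ^t*) = \tr M.
Proof. by rewrite mxtrace_mulC mulmxA unitary_adjmxK mul1mx. Qed.

Lemma hfrob2_unitary_conj M : hfrob2 (U *m M *m U ^t*) = hfrob2 M.
Proof. by rewrite /hfrob2 adjmx_conj mulmx_unitary_conj mxtrace_unitary_conj. Qed.

Lemma scalar_unitary_conj (k : C) : U *m k%:M *m U ^t* = k%:M.
Proof. by rewrite scalar_mxC mulmxtVK. Qed.

Lemma hfrob2_sub_scalar_unitary_conj M (k : C) :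
  hfrob2 (U *m M *m U ^t* - k%:M) = hfrob2 (M - k%:M).
Proof.
by rewrite -{1}(scalar_unitary_conj k) -mulmxBl -mulmxBr hfrob2_unitary_conj.
Qed.

End UnitaryConjugation.

Section Spectral.
Variables (C : numClosedFieldType) (n : nat) (A : 'M[C]_n).
Hypothesis A_normal : A \is normalmx.

Lemma spectral_conj :
  spectralmx A *m A *m (spectralmx A) ^t* = diag_mx (spectral_diag A).
Proof.
have U_unitary := spectral_unitarymx A.
have /orthomx_spectralP A_spectral := A_normal.
rewrite {2}A_spectral invmx_unitary //.
by rewrite !mulmxA mulmxtVK // (unitarymxP U_unitary) mul1mx.
Qed.

Lemma spectral_diag_eigenvalue i : eigenvalue A (spectral_diag A 0 i).
Proof.
have U_unitary := spectral_unitarymx A.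
apply/eigenvalueP; exists (row i (spectralmx A)).
  rewrite -row_mul -[spectralmx A *m A](mulmxKtV _ U_unitary) // spectral_conj.
  by rewrite mul_diag_mx; apply/rowP => j; rewrite !mxE.
apply/eqP => row0.
have := congr1 (fun v => (v *m (spectralmx A) ^t*) 0 i) row0.
by rewrite /= -row_mul (unitarymxP U_unitary) mul0mx !mxE eqxx => /eqP; rewrite oner_eq0.
Qed.

Lemma normal_trace_gap_ge (l L k : C) (S : 'M[C]_n) :
  0 < l -> l <= L -> (forall i, l <= spectral_diag A 0 i <= L) -> S ^t* = S ->
  - pinch (l / L) * hfrob2 (A *m S - k%:M)
    <= \tr ((A *m S) *m (A *m S)) - hfrob2 (A *m S).
Proof.
move=> l_gt0 lL d_bound S_herm; set U := spectralmx A.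
have U_unitary : U \is unitarymx := spectral_unitarymx A.
have conj_AS : U *m (A *m S) *m U ^t* = diag_mx (spectral_diag A) *m (U *m S *m U ^t*).
  by rewrite -spectral_conj (mulmx_unitary_conj U_unitary).
have T_herm : (U *m S *m U ^t*) ^t* = U *m S *m U ^t* by rewrite adjmx_conj S_herm.
have := diag_herm_trace_gap_ge k l_gt0 lL d_bound T_herm.
rewrite -conj_AS (hfrob2_sub_scalar_unitary_conj U_unitary) (mulmx_unitary_conj U_unitary).
by rewrite (mxtrace_unitary_conj U_unitary) (hfrob2_unitary_conj U_unitary).
Qed.

End Spectral.

Section RealEmbedding.
Variables (R : rcfType) (n : nat).
Local Notation toC := (real_complex R).
Implicit Types M : 'M[R]_n.

Lemma adjmx_map_real M : (map_mx toC M) ^t* = map_mx toC M^T.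
Proof.
by apply/matrixP => i j; rewrite !mxE conj_Creal //; apply/complex_realP; exists (M j i).
Qed.

Lemma hermsymmx_map_real M : symmx M -> map_mx toC M \is hermsymmx.
Proof.
by move=> M_sym; apply/is_hermitianmxP; rewrite expr0 scale1r adjmx_map_real M_sym.
Qed.

Lemma hfrob2_map_real M : hfrob2 (map_mx toC M) = toC (frob2 M).
Proof. by rewrite /hfrob2 adjmx_map_real -map_mxM trace_map_mx. Qed.

End RealEmbedding.

Theorem lemma3p5 (R : rcfType) (n : nat) (P S : 'M[R]_n)
  (lmin lmax : R) :
  posdefmx P -> symmx S ->
  eigenvalue P lmin -> eigenvalue P lmax ->
  (forall a : R, eigenvalue P a -> lmin <= a <= lmax) ->
  let X := P *m S in
  let rho := lmin / lmax in
  let c := (1 - rho) ^+ 2 / (1 + rho ^+ 2) in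
  \tr (X *m X) - frob2 X >= - c * frob2 (tracefree X).
Proof.
move=> P_posdef S_sym eig_min _ eig_bound; cbv zeta; rewrite -/(pinch _).
set X := P *m S; pose toC := real_complex R.
have lmin_gt0 := posdefmx_eigenvalue_gt0 P_posdef eig_min.
have /andP[_ lmin_le_lmax] := eig_bound _ eig_min.
have A_herm : map_mx toC P \is hermsymmx := hermsymmx_map_real P_posdef.1.
have A_normal := hermitian_normalmx A_herm.
have d_bound i : toC lmin <= spectral_diag (map_mx toC P) 0 i <= toC lmax.
  have /mxOverP/(_ 0 i)/complex_realP[x d_i] := hermitian_spectral_diag_real A_herm.
  have : eigenvalue P x.
    by rewrite -(eigenvalue_map toC); have := spectral_diag_eigenvalue A_normal i; rewrite d_i.
  by move/eig_bound; rewrite d_i !lecR.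
have S_herm : (map_mx toC S) ^t* = map_mx toC S by rewrite adjmx_map_real S_sym.
have := normal_trace_gap_ge A_normal (toC (\tr X / n%:R)) _ _ d_bound S_herm.
rewrite ltcR lecR => /(_ lmin_gt0 lmin_le_lmax).
rewrite -map_mxM -map_scalar_mx -map_mxB -map_mxM trace_map_mx !hfrob2_map_real.
by rewrite -fmorph_div -fmorph_pinch -rmorphN -rmorphM -rmorphB lecR.
Qed.
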